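(* Let $K$ be a compact Hausdorff space. A one-dimensional real Banach space can be U-embedded into $C(K)$ if and only if $K$ contains at least one $G_\delta$-point, i.e. a point $p$ such that $\{p\}$ is a $G_\delta$-subset of $K$.
   Context: $C(K)$ carries the sup norm. A linear isometry $T\colon X\to Y$ is a U-embedding if every $x^*\in X^*$ has a unique $y^*\in Y^*$ with $T^*(y^* )=x^*$ and $\|y^*\|=\|x^*\|$. *)

From HB Require Import structures.
From mathcomp Require Import all_boot all_order all_algebra.
From mathcomp Require Import all_classical all_reals all_analysis borel_hierarchy.
Set Implicit Arguments. Unset Strict Implicit. Unset Printing Implicit Defensive.
Import Order.TTheory GRing.Theory Num.Theory.
Import numFieldNormedType.Exports.
Local Open Scope classical_set_scope.
Local Open Scope ring_scope.

Section Defs.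
Variables (R : realType).

Section CK.
Variable K : topologicalType.

Definition supnorm (f : K -> R) : R := sup [set `|f x| | x in [set: K]].

(* y* in C(K)^*: a bounded linear functional on C(K).  We represent it by a
   function on K -> R; only its values on continuous functions matter. *)
Definition CK_dual (phi : (K -> R) -> R) : Prop :=
  [/\ (forall f g, continuous f -> continuous g ->
         phi (fun x => f x + g x) = phi f + phi g),
      (forall (a : R) f, continuous f -> phi (fun x => a * f x) = a * phi f)
    & exists M : R, forall f, continuous f -> `|phi f| <= M * supnorm f].

Definition CK_dual_norm (phi : (K -> R) -> R) : R :=
  sup [set `|phi f| | f in [set f : K -> R | continuous f /\ supnorm f <= 1]].
End CK.

Section Dual.
Variable X : normedModType R.

Definition dual_fun (xs : X -> R) : Prop :=
  (forall (a : R) (x y : X), xs (a *: x + y) = a * xs x + xs y) /\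
  (exists M : R, forall x, `|xs x| <= M * `|x|).

Definition dual_norm (xs : X -> R) : R :=
  sup [set `|xs x| | x in [set x : X | `|x| <= 1]].

Definition one_dimensional : Prop :=
  exists e : X, e != 0 /\ forall x : X, exists t : R, x = t *: e.
End Dual.

Section UEmb.
Variables (X : normedModType R) (K : topologicalType).

Definition lin_isometry_CK (T : X -> K -> R) : Prop :=
  [/\ (forall x, continuous (T x)),
      (forall (a : R) (x y : X), T (a *: x + y) = (fun k => a * T x k + T y k))
    & (forall x, supnorm (T x) = `|x|)].

(* T^*(y* ) = y* o T.  Uniqueness of y* is as an element of C(K)^*, i.e.
   agreement on all continuous functions. *)
Definition U_embedding (T : X -> K -> R) : Prop :=
  lin_isometry_CK T /\
  forall xs : X -> R, dual_fun xs ->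
    exists ys : (K -> R) -> R,
      [/\ CK_dual ys, (forall x, ys (T x) = xs x),
          CK_dual_norm ys = dual_norm xs
        & forall zs : (K -> R) -> R, CK_dual zs ->
            (forall x, zs (T x) = xs x) -> CK_dual_norm zs = dual_norm xs ->
            forall f : K -> R, continuous f -> zs f = ys f].
End UEmb.
End Defs.

From HB Require Import structures.
From mathcomp Require Import all_boot all_order all_algebra.
From mathcomp Require Import all_classical all_reals all_analysis borel_hierarchy.
From mathcomp Require Import ring lra.
Import Order.TTheory GRing.Theory Num.Theory.
Import numFieldNormedType.Exports.
Local Open Scope classical_set_scope.
Local Open Scope ring_scope.
Set Implicit Arguments. Unset Strict Implicit. Unset Printing Implicit Defensive.

(** If T is a U-embedding of the line spanned by e, then at every point k where
    |T e| attains its maximum |e|, the functional g |-> g k / T e k is a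
    norm-preserving extension of the coordinate functional of e; uniqueness of
    that extension and Urysohn's lemma force the maximum point p to be unique,
    and then {p} is the intersection of the open sets [|T e| > |e| - 1/(n+1)].
    Conversely, if {p} is the intersection of open sets U_n, the normalized sum
    of 2^-(n+1) u_n, with u_n Urysohn functions equal to 1 at p and 0 off U_n,
    is a peak function f at p, and t e |-> t |e| f is a U-embedding: a
    functional psi with norm at most |psi f| kills every g with
    |g| <= 1 - |f|, hence, cutting g off at small levels, every g vanishing at
    p, so psi = psi f * delta_p. *)

Section ContinuousFunctions.
Variables (R : realType) (K : topologicalType).
Implicit Types (a : R) (f g : K -> R).

Lemma continuous_cstM a g : continuous g -> continuous (fun x => a * g x).
Proof. by move=> cg x; exact: (cvgM (cvg_cst a) (cg x)). Qed.

Lemma continuous_add f g :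
  continuous f -> continuous g -> continuous (fun x => f x + g x).
Proof. by move=> cf cg x; exact: (cvgD (cf x) (cg x)). Qed.

Lemma continuous_sub f g :
  continuous f -> continuous g -> continuous (fun x => f x - g x).
Proof. by move=> cf cg x; exact: (continuousB (cf x) (cg x)). Qed.

Lemma continuous_normr g : continuous g -> continuous (fun x => `|g x|).
Proof. by move=> cg x; exact: (cvg_norm (cg x)). Qed.

End ContinuousFunctions.

Section SupNorm.
Variables (R : realType) (K : topologicalType).
Implicit Types (f g : K -> R) (phi : (K -> R) -> R).

Lemma supnorm_empty g : ~ ([set: K] !=set0) -> supnorm g = 0.
Proof.
move=> K0; rewrite /supnorm.
suff -> : [set `|g x| | x in [set: K]] = set0 by rewrite sup0.
by apply/seteqP; split => // t [x _ _]; apply: K0; exists x.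
Qed.

Lemma supnorm_le g M : 0 <= M -> (forall x, `|g x| <= M) -> supnorm g <= M.
Proof.
move=> M0 gM; have [[x _]|K0] := pselect ([set: K] !=set0).
  by apply: ge_sup => [|_ [y _ <-]]; [exists `|g x|, x|].
by rewrite supnorm_empty.
Qed.

Hypothesis cK : compact [set: K].

Lemma compact_argmax_normr g : continuous g -> [set: K] !=set0 ->
  exists p, forall x, `|g x| <= `|g p|.
Proof.
move=> cg K0; have [p _ gp] := compact_EVT_max K0 cK
  (continuous_subspaceT (continuous_normr cg)).
by exists p => x; apply: gp; rewrite in_setT.
Qed.

Lemma supnorm_ub g x : continuous g -> `|g x| <= supnorm g.
Proof.
move=> cg; have [p gp] := compact_argmax_normr cg (ex_intro _ x I).
by apply: ub_le_sup; [exists `|g p| => _ [y _ <-]|exists x].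
Qed.

Lemma supnorm_ge0 g : continuous g -> 0 <= supnorm g.
Proof.
move=> cg; have [[x _]|K0] := pselect ([set: K] !=set0).
  exact: le_trans (normr_ge0 _) (supnorm_ub x cg).
by rewrite supnorm_empty.
Qed.

Lemma supnorm_eq g p M : continuous g ->
  (forall x, `|g x| <= M) -> `|g p| = M -> supnorm g = M.
Proof.
move=> cg gM gp; apply/le_anti/andP; split; last by rewrite -gp supnorm_ub.
by apply: supnorm_le => //; rewrite -gp.
Qed.

Lemma supnorm_attained g : continuous g -> [set: K] !=set0 ->
  exists p, `|g p| = supnorm g.
Proof.
move=> cg K0; have [p gp] := compact_argmax_normr cg K0.
by exists p; apply/esym/(supnorm_eq cg gp).
Qed.

Lemma CK_dual_norm_ge phi g : CK_dual phi -> continuous g ->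
  supnorm g <= 1 -> `|phi g| <= CK_dual_norm phi.
Proof.
move=> [_ _ [M phiM]] cg g1; apply: ub_le_sup; last by exists g.
exists `|M| => _ [h [ch h1] <-]; apply: le_trans (phiM h ch) _.
apply: le_trans (ler_norm _) _; rewrite normrM (ger0_norm (supnorm_ge0 ch)).
exact: ler_piMr.
Qed.

Lemma CK_dual_norm_le phi c : 0 <= c ->
  (forall g, continuous g -> supnorm g <= 1 -> `|phi g| <= c) ->
  CK_dual_norm phi <= c.
Proof.
move=> c0 phic; apply: ge_sup => [|_ [h [ch h1] <-]]; last exact: phic.
exists `|phi (fun=> 0)|, (fun=> 0) => //; split; first exact: cst_continuous.
by apply: supnorm_le => // x; rewrite normr0.
Qed.

Lemma CK_dual_bound phi g : CK_dual phi -> continuous g ->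
  `|phi g| <= CK_dual_norm phi * supnorm g.
Proof.
move=> dphi cg; have [_ phiZ _] := dphi.
have [g0|gn0] := eqVneq (supnorm g) 0.
  suff -> : phi g = 0 by rewrite normr0 g0 mulr0.
  have -> : g = (fun x => 0 * g x).
    apply: funext => x; apply/eqP; rewrite mul0r -normr_le0 -g0.
    exact: supnorm_ub.
  by rewrite phiZ // mul0r.
have gpos : 0 < supnorm g by rewrite lt_def gn0 supnorm_ge0.
have := @CK_dual_norm_ge phi (fun x => (supnorm g)^-1 * g x) dphi.
rewrite phiZ // normrM ger0_norm ?invr_ge0 ?(ltW gpos) // mulrC.
rewrite -ler_pdivlMr ?invr_gt0 // invrK.
apply; first exact: continuous_cstM.
apply: supnorm_le => // x; rewrite normrM ger0_norm ?invr_ge0 ?(ltW gpos) //.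
by rewrite mulrC ler_pdivrMr // mul1r supnorm_ub.
Qed.

Lemma CK_dual_eval c p : CK_dual (fun g => c * g p).
Proof.
split=> [f g _ _|a g _|]; [exact: mulrDr|exact: mulrCA|].
by exists `|c| => g cg; rewrite normrM ler_wpM2l // supnorm_ub.
Qed.

Lemma CK_dual_norm_eval c p : CK_dual_norm (fun g => c * g p) = `|c|.
Proof.
apply/le_anti/andP; split.
  apply: CK_dual_norm_le => // g cg g1; rewrite normrM; apply: ler_piMr => //.
  exact: le_trans (supnorm_ub p cg) g1.
have c1 : continuous (fun _ : K => 1 : R) by exact: cst_continuous.
have := CK_dual_norm_ge (CK_dual_eval c p) c1; rewrite mulr1; apply.
by rewrite (@supnorm_eq _ p 1 c1) // => [x|]; rewrite normr1.
Qed.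

End SupNorm.

Lemma strict_argmax_Gdelta (R : realType) (T : topologicalType) (g : T -> R) p :
  continuous g -> (forall x, x != p -> g x < g p) -> Gdelta [set p].
Proof.
move=> cg gp; exists (fun i => g @^-1` [set r | g p - i.+1%:R^-1 < r]).
  by move=> i; apply: open_comp => [x _|]; [exact: cg|exact: open_gt].
apply/seteqP; split=> [x -> i _ /=|x gx /=].
  by rewrite ltrBlDr ltrDl invr_gt0 ltr0Sn.
apply/eqP; apply: contraT => /gp /ltr_add_invr [i gxi].
by have := gx i I; rewrite /= ltrBlDr => /(lt_trans gxi); rewrite ltxx.
Qed.

Lemma urysohn_point (R : realType) (K : topologicalType) (A : set K) p :
  hausdorff_space K -> compact [set: K] -> closed A -> ~ A p ->
  exists g : K -> R,
    [/\ continuous g, forall x, 0 <= g x <= 1,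
         forall x, A x -> g x = 0 & g p = 1].
Proof.
move=> hK cK clA Ap.
have : uniform_separator A [set p].
  apply: (normal_separatorP.1 (compact_normal hK cK)) => //.
    exact: accessible_closed_set1 (hausdorff_accessible hK) p.
  by apply/seteqP; split=> // x [Ax xp]; apply: Ap; rewrite -xp.
move/(@uniform_separatorP K R) => [g [cg g01 gA gp]].
exists g; split=> // [x|x Ax|]; last exact: (gp _ (imageP g (erefl p))).
  by have := g01 _ (imageT g x); rewrite /= in_itv.
exact: (gA _ (imageP g Ax)).
Qed.

Section Clamp.
Variable R : realType.
Implicit Types e y : R.

Definition clamp e y := Num.max (- e) (Num.min e y).

Lemma clamp_id e y : `|y| <= e -> clamp e y = y.
Proof.
rewrite ler_norml => /andP[ey ye].
by rewrite /clamp (min_r ye) (max_r ey).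
Qed.

Lemma clamp_cases e y : 0 <= e ->
  [\/ clamp e y = - e /\ y <= - e, clamp e y = e /\ e <= y
    | clamp e y = y /\ `|y| <= e].
Proof.
move=> e0; rewrite /clamp; have [ey|ye] := leP e y.
  by rewrite max_r; [constructor 2|lra].
have [yNe|Ney] := leP y (- e); first by constructor 1.
by constructor 3; split=> //; rewrite ler_norml ltW // ltW.
Qed.

Lemma normr_clamp e y : 0 <= e -> `|clamp e y| <= e.
Proof.
move=> e0; have [[-> _]|[-> _]|[-> //]] := clamp_cases y e0.
  by rewrite normrN ger0_norm.
by rewrite ger0_norm.
Qed.

Lemma normr_sub_clamp e y : 0 <= e -> `|y - clamp e y| <= `|y|.
Proof.
move=> e0; have [[-> ye]|[-> ey]|[-> _]] := clamp_cases y e0.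
- by rewrite !ler0_norm; lra.
- by rewrite !ger0_norm; lra.
by rewrite subrr normr0.
Qed.

Lemma continuous_clamp (T : topologicalType) e (g : T -> R) :
  continuous g -> continuous (fun x => clamp e (g x)).
Proof.
move=> cg x; apply: (@continuous_max _ _ (fun=> - e) ((fun=> e) \min g)).
  exact: cvg_cst.
by apply: continuous_min; [exact: cvg_cst|exact: cg].
Qed.

End Clamp.

Section PeakFunction.
Variables (R : realType) (K : topologicalType).

Definition peak_function (f : K -> R) (p : K) :=
  [/\ continuous f, forall x, `|f x| <= 1, f p = 1 &
      forall x, x != p -> `|f x| < 1].

Hypothesis cK : compact [set: K].
Variables (f : K -> R) (p : K).
Hypothesis fp : peak_function f p.

Lemma peak_function_gap (C : set K) : closed C -> ~ C p ->
  exists2 d, 0 < d & forall x, C x -> `|f x| <= 1 - d.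
Proof.
move=> clC Cp; have [cf _ _ f1] := fp.
have [[x Cx]|C0] := pselect (C !=set0); last first.
  by exists 1 => // x Cx; case: C0; exists x.
have [k /set_mem Ck fk] := compact_EVT_max (ex_intro _ x Cx)
  (subclosed_compact clC cK (@subsetT _ C))
  (continuous_subspaceT (continuous_normr cf)).
have kp : k != p by apply: contraPneq Cp => <-.
exists (1 - `|f k|); first by have := f1 k kp; lra.
by move=> y Cy; have := fk y (mem_set Cy); lra.
Qed.

Variable phi : (K -> R) -> R.
Hypotheses (dphi : CK_dual phi) (phi_norm : CK_dual_norm phi <= `|phi f|).

Lemma peak_dual_bound g : continuous g -> `|phi g| <= `|phi f| * supnorm g.
Proof.
move=> cg; apply: le_trans (CK_dual_bound cK dphi cg) _.
by rewrite ler_wpM2r // supnorm_ge0.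
Qed.

(* f + g and f - g lie in the unit ball, so |phi f +- phi g| <= |phi f|. *)
Lemma peak_dual_dominated g : continuous g ->
  (forall x, `|g x| <= 1 - `|f x|) -> phi g = 0.
Proof.
move=> cg gf; have [cf _ _ _] := fp; have [phiD phiZ _] := dphi.
have shift_le s : `|s| = 1 -> `|phi f + s * phi g| <= `|phi f|.
  move=> s1; have csg := continuous_cstM (a := s) cg.
  rewrite -phiZ // -phiD //; apply: le_trans (peak_dual_bound _) _.
    exact: continuous_add.
  apply: ler_piMr => //; apply: supnorm_le => // x.
  apply: le_trans (ler_normD _ _) _; rewrite normrM s1 mul1r.
  by have := gf x; lra.
have := shift_le 1 (normr1 _).
have := shift_le (-1) ltac:(by rewrite normrN normr1).
rewrite mul1r mulN1r; have [f0|f0] := leP 0 (phi f).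
  by rewrite !(ger0_norm f0) !ler_norml => /andP[? ?] /andP[? ?]; lra.
by rewrite !(ltr0_norm f0) !ler_norml => /andP[? ?] /andP[? ?]; lra.
Qed.

Lemma peak_dual_small g e : continuous g -> g p = 0 -> 0 < e ->
  `|phi g| <= `|phi f| * e.
Proof.
move=> cg gp e0; have [cf f1 _ _] := fp; have [phiD phiZ _] := dphi.
pose r x := g x - clamp e (g x).
have cr : continuous r.
  by apply: continuous_sub => //; exact: continuous_clamp.
have [d d0 fd] : exists2 d, 0 < d & forall x, e <= `|g x| -> `|f x| <= 1 - d.
  apply: peak_function_gap => /=.
    apply: (@preimage_closed _ _ (fun x => `|g x|) [set r | e <= r]).
      by move=> x _; exact: continuous_normr.
    exact: closed_ge.
  by rewrite gp normr0 => /(lt_le_trans e0); rewrite ltxx.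
have M0 := supnorm_ge0 cK cg; pose s := d / (supnorm g + 1).
have s0 : 0 < s by rewrite divr_gt0 //; lra.
(* r = 0 where |g| < e; where |g| >= e, the gap 1 - |f| >= d absorbs s * r *)
have r0 : phi r = 0.
  have : phi (fun x => s * r x) = 0.
    apply: peak_dual_dominated => [|x]; first exact: continuous_cstM.
    rewrite normrM gtr0_norm //; have [ge|lt] := leP e `|g x|.
      have := fd x ge; suff : s * `|r x| <= d by lra.
      rewrite /s mulrAC ler_pdivrMr; last lra.
      rewrite ler_wpM2l ?ltW //; have := supnorm_ub cK x cg.
      by have := normr_sub_clamp (g x) (ltW e0); lra.
    by rewrite /r (clamp_id (ltW lt)) subrr normr0 mulr0; have := f1 x; lra.
  by rewrite phiZ // => /eqP; rewrite mulf_eq0 gt_eqF //= => /eqP.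
have -> : g = (fun x => clamp e (g x) + r x).
  by apply: funext => x; rewrite /r addrC subrK.
rewrite phiD // ?r0 ?addr0; last exact: continuous_clamp.
apply: le_trans (peak_dual_bound (continuous_clamp (e := e) cg)) _.
rewrite ler_wpM2l //; apply: supnorm_le => [|x]; first exact: ltW.
exact: normr_clamp (ltW e0).
Qed.

Lemma peak_dual_eval g : continuous g -> phi g = phi f * g p.
Proof.
move=> cg; have [cf _ fp1 _] := fp; have [phiD phiZ _] := dphi.
pose g' x := g x + - g p * f x.
have cg' : continuous g' by apply: continuous_add => //; exact: continuous_cstM.
have : phi g' = 0.
  apply/eqP; rewrite -normr_le0; apply/ler_addgt0Pr => e e0; rewrite add0r.
  have e' : 0 < e / (`|phi f| + 1) by rewrite divr_gt0 // ltr_wpDl.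
  apply: le_trans (peak_dual_small cg' _ e') _; first by rewrite /g' fp1; ring.
  by rewrite mulrA ler_pdivrMr ?ltr_wpDl //; lra.
by rewrite phiD // ?phiZ //; [lra|exact: continuous_cstM].
Qed.

End PeakFunction.

Section DyadicSum.
Variables (R : realType) (K : topologicalType) (u : nat -> K -> R).
Hypotheses (u01 : forall i x, 0 <= u i x <= 1)
  (uc : forall i, continuous (u i)).

Local Notation q := (2^-1 : R).

Let q_gt0 : 0 < q. Proof. by rewrite invr_gt0. Qed.

Definition dyadic_psum n x := \sum_(0 <= i < n) q ^+ i.+1 * u i x.

Definition dyadic_sum x := sup (range (dyadic_psum ^~ x)).

Lemma dyadic_psum0 x : dyadic_psum 0 x = 0.
Proof. by rewrite /dyadic_psum big_geq. Qed.

Lemma dyadic_psumS n x :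
  dyadic_psum n.+1 x = dyadic_psum n x + q ^+ n.+1 * u n x.
Proof. by rewrite /dyadic_psum big_nat_recr. Qed.

Lemma dyadic_psum_tail n m x :
  0 <= dyadic_psum (n + m) x - dyadic_psum n x <= q ^+ n - q ^+ (n + m).
Proof.
elim: m => [|m]; first by rewrite addn0 !subrr lexx.
rewrite addnS dyadic_psumS exprS => /andP[lo hi].
have qn0 : 0 <= q ^+ (n + m) by rewrite exprn_ge0 // ltW.
have /andP[u0 u1] := u01 (n + m) x.
have qu0 : 0 <= q * q ^+ (n + m) * u (n + m) x by rewrite !mulr_ge0 // ltW.
have qu1 : q * q ^+ (n + m) * u (n + m) x <= q * q ^+ (n + m).
  by rewrite ler_piMr // mulr_ge0 // ltW.
apply/andP; split; lra.
Qed.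

Lemma dyadic_psum_homo x :
  {homo dyadic_psum ^~ x : n m / (n <= m)%N >-> n <= m}.
Proof.
move=> n m /subnKC <-; have /andP[+ _] := dyadic_psum_tail n (m - n) x.
by rewrite subr_ge0.
Qed.

Lemma dyadic_psum_bound n x : 0 <= dyadic_psum n x <= 1 - q ^+ n.
Proof.
have := dyadic_psum_tail 0 n x.
by rewrite add0n dyadic_psum0 subr0 expr0.
Qed.

Lemma continuous_dyadic_psum n : continuous (dyadic_psum n).
Proof.
elim: n => [|n IH].
  rewrite (_ : dyadic_psum 0 = fun=> 0); first exact: cst_continuous.
  by apply: funext => x; rewrite dyadic_psum0.
rewrite (_ : dyadic_psum n.+1 = fun x => dyadic_psum n x + q ^+ n.+1 * u n x).
  by apply: continuous_add => //; exact: continuous_cstM.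
by apply: funext => x; rewrite dyadic_psumS.
Qed.

Lemma dyadic_psum_le_sum n x : dyadic_psum n x <= dyadic_sum x.
Proof.
apply: ub_le_sup; last by exists n.
exists 1 => _ [m _ <-]; have /andP[_] := dyadic_psum_bound m x.
by have := exprn_gt0 m q_gt0; lra.
Qed.

Lemma dyadic_sum_le_psum n x : dyadic_sum x <= dyadic_psum n x + q ^+ n.
Proof.
apply: ge_sup => [|_ [m _ <-]]; first by exists (dyadic_psum 0 x), 0%N.
have [nm|mn] := leqP n m.
  rewrite -(subnKC nm); have /andP[_] := dyadic_psum_tail n (m - n) x.
  by have := exprn_gt0 (n + (m - n)) q_gt0; lra.
by have := dyadic_psum_homo x (ltnW mn); have := exprn_gt0 n q_gt0; lra.
Qed.

Lemma dyadic_sum_ge0 x : 0 <= dyadic_sum x.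
Proof.
apply: le_trans (dyadic_psum_le_sum 0 x).
by have /andP[] := dyadic_psum_bound 0 x.
Qed.

Lemma continuous_dyadic_sum : continuous dyadic_sum.
Proof.
move=> x; apply/cvgrPdist_lt => e e0.
have e3 : 0 < e / 3 by rewrite divr_gt0.
have /cvgrPdist_lt /(_ _ e3) [N _ qN] : q ^+ n @[n --> \oo] --> 0.
  by apply: cvg_expr; rewrite gtr0_norm // invf_lt1 // ltr1n.
have {qN} := qN N (leqnn N); rewrite sub0r normrN gtr0_norm ?exprn_gt0 // => qN.
have /cvgrPdist_lt /(_ _ e3) : dyadic_psum N y @[y --> x] --> dyadic_psum N x.
  exact: continuous_dyadic_psum.
apply: filterS => y.
have := dyadic_psum_le_sum N x; have := dyadic_sum_le_psum N x.
have := dyadic_psum_le_sum N y; have := dyadic_sum_le_psum N y.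
by rewrite !ltr_norml => ? ? ? ? /andP[? ?]; apply/andP; split; lra.
Qed.

Variable p : K.
Hypothesis up : forall i, u i p = 1.

Lemma dyadic_psum_le_peak N x : dyadic_psum N x <= dyadic_psum N p.
Proof.
rewrite /dyadic_psum; apply: ler_sum => i _; rewrite up mulr1.
by have /andP[_] := u01 i x; apply: ler_piMr; rewrite exprn_ge0 // ltW.
Qed.

Lemma dyadic_psum_gap i x N : u i x = 0 -> (i < N)%N ->
  dyadic_psum N x + q ^+ i.+1 <= dyadic_psum N p.
Proof.
move=> uix; elim: N => // N IH; rewrite !dyadic_psumS up mulr1.
have := dyadic_psum_le_peak N x; have := exprn_gt0 N.+1 q_gt0.
rewrite ltnS leq_eqVlt => + + /orP[/eqP iN|/IH]; first by rewrite -iN uix; lra.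
have /andP[_ u1] := u01 N x.
have : q ^+ N.+1 * u N x <= q ^+ N.+1 by rewrite ler_piMr // exprn_ge0 // ltW.
lra.
Qed.

Lemma dyadic_sum_gap i x :
  u i x = 0 -> dyadic_sum x <= dyadic_sum p - q ^+ i.+1.
Proof.
move=> uix; apply: ge_sup => [|_ [m _ <-]].
  by exists (dyadic_psum 0 x), 0%N.
have := dyadic_psum_homo x (leq_addr i.+1 m).
have := dyadic_psum_gap uix (ltn_addl m (ltnSn i)).
by have := dyadic_psum_le_sum (m + i.+1) p; lra.
Qed.

Lemma dyadic_sum_gt0 : 0 < dyadic_sum p.
Proof.
apply: lt_le_trans (dyadic_psum_le_sum 1 p).
by rewrite dyadic_psumS dyadic_psum0 up add0r mulr1 exprn_gt0.
Qed.

End DyadicSum.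

Lemma peak_function_normalize (R : realType) (K : topologicalType)
    (F : K -> R) p :
  continuous F -> (forall x, 0 <= F x) -> 0 < F p ->
  (forall x, x != p -> F x < F p) -> peak_function (fun x => (F p)^-1 * F x) p.
Proof.
move=> cF F0 Fp0 Fp; have Fle x : F x <= F p.
  by have [->//|/Fp/ltW//] := eqVneq x p.
have normE x : `|(F p)^-1 * F x| = F x / F p.
  by rewrite normrM gtr0_norm ?invr_gt0 // ger0_norm // mulrC.
split=> [|x||x /Fp Fx]; first exact: continuous_cstM.
- by rewrite normE ler_pdivrMr // mul1r.
- by rewrite mulVf // gt_eqF.
by rewrite normE ltr_pdivrMr // mul1r.
Qed.

Lemma Gdelta_peak_function (R : realType) (K : topologicalType) p :
  hausdorff_space K -> compact [set: K] -> Gdelta [set p] ->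
  exists f : K -> R, peak_function f p.
Proof.
move=> hK cK [U Uo pU].
have Up i : U i p by have : [set p] p by []; rewrite pU; apply.
have /choice [u uU] i : exists g : K -> R, [/\ continuous g,
    forall x, 0 <= g x <= 1, forall x, ~ U i x -> g x = 0 & g p = 1].
  apply: (urysohn_point R hK cK); [exact: open_closedC|by move/(_ (Up i))].
have uc i : continuous (u i) by have [] := uU i.
have u01 i : forall x, 0 <= u i x <= 1 by have [] := uU i.
have up i : u i p = 1 by have [] := uU i.
have miss x : x != p -> exists i, u i x = 0.
  move=> xp; have [i Uix] : exists i, ~ U i x.
    apply: contrapT => allU; move/eqP: xp; apply.
    suff : (\bigcap_i U i) x by rewrite -pU.
    by move=> i _; apply: contrapT => Uix; apply: allU; exists i.
  by exists i; have [_ _ u0 _] := uU i; exact: u0.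
exists (fun x => (dyadic_sum u p)^-1 * dyadic_sum u x).
apply: peak_function_normalize.
- exact: continuous_dyadic_sum.
- exact: dyadic_sum_ge0.
- exact: dyadic_sum_gt0.
move=> x /miss [i /(dyadic_sum_gap u01 up) gap].
by apply: le_lt_trans gap _; rewrite ltrBlDr ltrDl exprn_gt0 // invr_gt0.
Qed.

Section OneDimensional.
Variables (R : realType) (X : normedModType R) (e : X) (co : X -> R).
Hypotheses (e0 : e != 0) (coE : forall x, x = co x *: e).

Lemma coZ t : co (t *: e) = t.
Proof.
have /eqP : (co (t *: e) - t) *: e = 0 by rewrite scalerBl -coE subrr.
by rewrite scaler_eq0 (negbTE e0) orbF subr_eq0 => /eqP.
Qed.

Lemma co_linear a x y : co (a *: x + y) = a * co x + co y.
Proof. by rewrite {1}(coE x) {1}(coE y) scalerA -scalerDl coZ. Qed.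

Lemma normr_co x : `|x| = `|co x| * `|e|.
Proof. by rewrite {1}(coE x) normrZ. Qed.

Lemma linear_co (L : X -> R) :
  (forall a x y, L (a *: x + y) = a * L x + L y) -> forall x, L x = co x * L e.
Proof.
move=> Llin x; have L0 : L 0 = 0.
  by have := Llin 1 0 0; rewrite scale1r addr0 mul1r; lra.
by rewrite {1}(coE x) -[co x *: e]addr0 Llin L0 addr0.
Qed.

Lemma dual_norm_co_mul xs : (forall x, xs x = co x * xs e) ->
  dual_norm xs = `|xs e| / `|e|.
Proof.
move=> xsE; have e_gt0 : 0 < `|e| by rewrite normr_gt0.
have ub x : `|x| <= 1 -> `|xs x| <= `|xs e| / `|e|.
  by move=> x1; rewrite xsE normrM ler_pdivlMr // mulrAC -normr_co ler_piMl.
apply/le_anti/andP; split.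
  apply: ge_sup => [|_ [x /ub ? <-//]].
  by exists `|xs 0|, 0 => //=; rewrite normr0.
apply: ub_le_sup; first by exists (`|xs e| / `|e|) => _ [x /ub ? <-].
exists (`|e|^-1 *: e); first by rewrite /= normrZ normfV normr_id mulVf ?gt_eqF.
by rewrite xsE coZ normrM normfV normr_id mulrC.
Qed.

Lemma dual_fun_co : dual_fun co.
Proof.
split; first exact: co_linear.
by exists `|e|^-1 => x; rewrite (normr_co x) mulrCA mulVf ?mulr1 // normr_eq0.
Qed.

Lemma dual_norm_co : dual_norm co = `|e|^-1.
Proof.
have coe : co e = 1 by rewrite -[e]scale1r coZ.
by rewrite dual_norm_co_mul => [|x]; rewrite coe ?normr1 ?mul1r ?mulr1.
Qed.

End OneDimensional.

Section UEmbeddingGdelta.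
Variables (R : realType) (K : topologicalType) (X : normedModType R).
Variables (e : X) (co : X -> R) (T : X -> K -> R).
Hypotheses (hK : hausdorff_space K) (cK : compact [set: K]).
Hypotheses (e0 : e != 0) (coE : forall x, x = co x *: e) (hT : U_embedding T).

Lemma U_embedding_co x k : T x k = co x * T e k.
Proof.
have [[_ Tlin _] _] := hT.
by apply: (linear_co coE (L := T^~ k)) => a y z; rewrite Tlin.
Qed.

(* Both sides are the unique norm-preserving extension of co applied to g. *)
Lemma U_embedding_norming_eval k1 k2 g :
  `|T e k1| = `|e| -> `|T e k2| = `|e| -> continuous g ->
  (T e k1)^-1 * g k1 = (T e k2)^-1 * g k2.
Proof.
move=> T1 T2 cg; have [_ ext] := hT.
have [ys [_ _ _ ys_uniq]] := ext co (dual_fun_co e0 coE).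
suff ys_eval k : `|T e k| = `|e| -> (T e k)^-1 * g k = ys g by rewrite !ys_eval.
move=> Tk; apply: (ys_uniq (fun g => (T e k)^-1 * g k)) => //.
- exact: CK_dual_eval.
- move=> x; rewrite (U_embedding_co x k) mulrCA mulVf ?mulr1 //.
  by rewrite -normr_eq0 Tk normr_eq0.
by rewrite CK_dual_norm_eval // (dual_norm_co e0 coE) normfV Tk.
Qed.

Lemma U_embedding_norming_point_unique k1 k2 :
  `|T e k1| = `|e| -> `|T e k2| = `|e| -> k1 = k2.
Proof.
move=> T1 T2; apply: contrapT => k12.
have [g [cg _ g2 g1]] := urysohn_point R hK cK
  (@accessible_closed_set1 K (hausdorff_accessible hK) k2) k12.
have := U_embedding_norming_eval T1 T2 cg.
rewrite g1 (g2 k2 erefl) mulr1 mulr0 => /eqP.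
by rewrite invr_eq0 -normr_eq0 T1 normr_eq0 (negbTE e0).
Qed.

Lemma U_embedding_Gdelta_point : exists p : K, Gdelta [set p].
Proof.
have [[cT _ Tiso] _] := hT.
have K0 : [set: K] !=set0.
  apply: contrapT => K0; move: e0; rewrite -normr_eq0 -Tiso.
  by rewrite supnorm_empty ?eqxx.
have [p Tp] := supnorm_attained cK (cT e) K0; rewrite Tiso in Tp.
exists p; apply: (strict_argmax_Gdelta (g := fun x => `|T e x|)).
  exact: continuous_normr.
move=> x xp; rewrite Tp lt_neqAle -{2}(Tiso e) supnorm_ub // andbT.
by apply: contra_neq xp => Tx; exact: U_embedding_norming_point_unique.
Qed.

End UEmbeddingGdelta.

Section PeakEmbedding.
Variables (R : realType) (K : topologicalType) (X : normedModType R).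
Variables (e : X) (co : X -> R) (f : K -> R) (p : K).
Hypotheses (cK : compact [set: K]) (hf : peak_function f p).
Hypotheses (e0 : e != 0) (coE : forall x, x = co x *: e).

Definition peak_embedding (x : X) (k : K) := co x * `|e| * f k.

Lemma lin_isometry_peak_embedding : lin_isometry_CK peak_embedding.
Proof.
have [cf f1 fp _] := hf.
split=> [x|a x y|x]; first exact: continuous_cstM.
  by apply: funext => k; rewrite /peak_embedding (co_linear e0 coE); ring.
apply: (@supnorm_eq _ _ cK _ p) => [|k|]; first exact: continuous_cstM.
  by rewrite (normr_co coE x) !normrM normr_id ler_piMr.
by rewrite /peak_embedding (normr_co coE x) fp mulr1 normrM normr_id.
Qed.

Lemma peak_embedding_U_embedding : U_embedding peak_embedding.
Proof.
have [cf _ fp _] := hf.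
split=> [|xs [xs_lin _]]; first exact: lin_isometry_peak_embedding.
have e_neq0 : `|e| != 0 by rewrite normr_eq0.
have xsE := linear_co coE xs_lin; pose c := xs e / `|e|.
have xs_norm : dual_norm xs = `|c|.
  by rewrite (dual_norm_co_mul e0 coE xsE) /c normrM normfV normr_id.
exists (fun g => c * g p); split=> [|||zs dzs zT zs_norm g cg].
- exact: CK_dual_eval.
- by move=> x; rewrite /peak_embedding fp mulr1 xsE /c; field.
- by rewrite CK_dual_norm_eval // xs_norm.
have [_ zsZ _] := dzs.
have zsf : zs f = c.
  have := zT e; rewrite /peak_embedding -[e in co e]scale1r (coZ e0 coE).
  rewrite mul1r zsZ //.
  by rewrite /c => <-; rewrite mulrAC divff // mul1r.
have zs_le : CK_dual_norm zs <= `|zs f| by rewrite zs_norm xs_norm zsf.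
by rewrite (peak_dual_eval cK hf dzs zs_le cg) zsf.
Qed.

End PeakEmbedding.

Theorem corollary6p29 (R : realType) (K : topologicalType)
  (hK : hausdorff_space K) (cK : compact [set: K])
  (X : completeNormedModType R) (hX : one_dimensional X) :
  (exists T : X -> K -> R, U_embedding T) <->
  (exists p : K, Gdelta [set p]).
Proof.
have [e [e0 eX]] := hX; have /choice [co coE] := eX.
split=> [[T hT]|[p /(Gdelta_peak_function R hK cK) [f hf]]].
  exact: (U_embedding_Gdelta_point hK cK e0 coE hT).
exists (peak_embedding e co f).
exact: (peak_embedding_U_embedding cK hf e0 coE).
Qed.
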